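(* Let $U$ be a finite set and $\{X_u\}_{u\in U}$ finite non-empty sets; write $X_V=\prod_{u\in V}X_u$ for $V\subset U$. For every $V\subset U$ let $S_V\subset X_V$. Then for every integer $k\le|U|$, $$\Big|\mathbb E_{x\in X_U}\prod_{\substack{V\subset U\\|V|\le k}}S_V(x_V)-\prod_{\substack{V\subset U\\|V|\le k}}\mathbb E_{x_V\in X_V}S_V(x_V)\Big|\le 2^{|U|}\max_{\substack{V\subset U\\|V|\le k}}\Big\|S_V-\mathbb E_{x_V\in X_V}S_V\Big\|_{\Box^V(X_V)} .$$
   Context: Sets are identified with their indicator functions; $\mathbb E_{x\in X}$ is the uniform average over a finite set $X$. For $x=(x_u)_{u\in U}\in X_U$ and $V\subset U$, $x_V=(x_u)_{u\in V}$; for $V=\emptyset$, $X_\emptyset$ is a one-point set. For a finite index set $V$ and $f:X_V\to\mathbb C$ the Gowers box norm is $$\|f\|_{\Box^V(X_V)}^{2^{|V|}}=\mathbb E_{x^0,x^1\in X_V}\prod_{\omega\in\{0,1\}^V}\mathcal C^{|\omega|}f(x^{\omega}),$$ with $x^{\omega}=(x^{\omega_v}_v)_{v\in V}$, $|\omega|=\sum_v\omega_v$, $\mathcal C$ complex conjugation; when $V=\emptyset$ (so $f$ is a constant) $\|f\|_{\Box^\emptyset}=|f|$. *)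

From HB Require Import structures.
From mathcomp Require Import all_boot all_order all_algebra.
Set Implicit Arguments. Unset Strict Implicit. Unset Printing Implicit Defensive.
Import Order.TTheory GRing.Theory Num.Theory.
Local Open Scope ring_scope.

Definition subidx (U : finType) (V : {set U}) : finType := {u : U | u \in V}.

Definition XV (U : finType) (X : U -> finType) (V : {set U}) : finType :=
  {dffun forall i : subidx V, X (val i)}.

Definition XU (U : finType) (X : U -> finType) : finType :=
  {dffun forall u : U, X u}.

Definition restr (U : finType) (X : U -> finType) (V : {set U}) (x : XU X)
  : XV X V := [ffun i : subidx V => x (val i)].

Definition avg (C : numDomainType) (T : finType) (f : T -> C) : C :=
  (#|T|%:R)^-1 * \sum_(x : T) f x.

Definition xomega (U : finType) (X : U -> finType) (V : {set U})
  (x0 x1 : XV X V) (w : {ffun subidx V -> bool}) : XV X V :=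
  [ffun i : subidx V => if w i then x1 i else x0 i].

Definition boxpow (C : numClosedFieldType) (U : finType) (X : U -> finType)
  (V : {set U}) (f : XV X V -> C) : C :=
  avg (fun p : XV X V * XV X V =>
    \prod_(w : {ffun subidx V -> bool})
       iter #|[set i | w i]| (fun z : C => z^*) (f (xomega p.1 p.2 w))).

(* Gowers box norm; for V = emptyset (f constant) it is |f|. *)
Definition boxnorm (C : numClosedFieldType) (U : finType) (X : U -> finType)
  (V : {set U}) (f : XV X V -> C) : C :=
  if V == set0 then `|boxpow f| else (2 ^ #|V|)%N.-root (boxpow f).

From HB Require Import structures.
From mathcomp Require Import all_boot all_order all_algebra.
From mathcomp Require Import ring.
Set Implicit Arguments. Unset Strict Implicit. Unset Printing Implicit Defensive.
Import Order.TTheory GRing.Theory Num.Theory.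
Local Open Scope ring_scope.

(** Telescoping over the sets V with |V| <= k, listed by decreasing size,
    writes the difference as a sum of at most 2^|U| terms
    E_x (1_{S_V} - E 1_{S_V})(x_V) * prod_W 1_{S_W}(x_W), where no later W
    contains V.  Each factor 1_{S_W} thus ignores some coordinate of V, and
    the Gowers-Cauchy-Schwarz inequality, obtained by one Cauchy-Schwarz step
    per coordinate of V, bounds the term by the box norm of the balanced
    function. *)

Section Average.
Variable C : numFieldType.
Implicit Types T : finType.

Lemma eq_avg T (f g : T -> C) : (forall x, f x = g x) -> avg f = avg g.
Proof. by move=> fg; rewrite /avg (eq_bigr g). Qed.

Lemma avg_reindex_inj T (s : T -> T) (h : T -> C) :
  injective s -> avg (fun x => h (s x)) = avg h.
Proof. by move=> s_inj; rewrite /avg [in RHS](reindex_inj s_inj). Qed.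

Lemma avg_cst T (c : C) : (0 < #|T|)%N -> avg (fun _ : T => c) = c.
Proof.
move=> T_gt0; rewrite /avg sumr_const -[c *+ _]mulr_natl mulrA mulVf ?mul1r //.
by rewrite pnatr_eq0 -lt0n.
Qed.

Lemma avg_pair T1 T2 (F : T1 -> T2 -> C) :
  avg (fun p : T1 * T2 => F p.1 p.2) = avg (fun x => avg (F x)).
Proof.
rewrite /avg card_prod natrM invfM -pair_bigA -mulrA mulr_sumr.
by congr (_ * _); apply: eq_bigr.
Qed.

Lemma avg_pair_fst T (h : T -> C) : avg (fun q : T * T => h q.1) = avg h.
Proof.
rewrite (avg_pair (fun x _ => h x)).
have [T0|T_gt0] := posnP #|T|; first by rewrite /avg T0 invr0 !mul0r.
by apply: eq_avg => x; rewrite avg_cst.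
Qed.

Lemma exchange_avg T1 T2 (F : T1 -> T2 -> C) :
  avg (fun x => avg (F x)) = avg (fun y => avg (F^~ y)).
Proof.
rewrite /avg -!mulr_sumr mulrCA exchange_big.
by congr (_ * (_ * _)); apply: eq_bigr.
Qed.

Lemma mulr_avgr T (c : C) (f : T -> C) : c * avg f = avg (fun x => c * f x).
Proof. by rewrite /avg mulrCA mulr_sumr. Qed.

Lemma avgD T (f g : T -> C) : avg (fun x => f x + g x) = avg f + avg g.
Proof. by rewrite /avg big_split mulrDr. Qed.

Lemma ler_avg T (f g : T -> C) : (forall x, f x <= g x) -> avg f <= avg g.
Proof. by move=> fg; rewrite ler_wpM2l ?invr_ge0 ?ler0n ?ler_sum. Qed.

Lemma avg_ge0 T (f : T -> C) : (forall x, 0 <= f x) -> 0 <= avg f.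
Proof. by move=> f_ge0; rewrite mulr_ge0 ?invr_ge0 ?ler0n ?sumr_ge0. Qed.

Lemma ler_norm_avg T (f : T -> C) : `|avg f| <= avg (fun x => `|f x|).
Proof.
by rewrite normrM ger0_norm ?invr_ge0 ?ler0n // ler_wpM2l ?invr_ge0 ?ler0n ?ler_norm_sum.
Qed.

Lemma norm_avg_le1 T (f : T -> C) : (forall x, `|f x| <= 1) -> `|avg f| <= 1.
Proof.
move=> f_le1; apply: le_trans (ler_norm_avg f) _.
have [T0|T_gt0] := posnP #|T|; first by rewrite /avg T0 invr0 mul0r ler01.
by rewrite -(avg_cst 1 T_gt0); apply: ler_avg.
Qed.

Lemma ler_sqr_avg T (a : T -> C) : (forall x, a x \is Num.real) ->
  avg a ^+ 2 <= avg (fun x => a x ^+ 2).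
Proof.
move=> a_real; have [T0|T_gt0] := posnP #|T|.
  by rewrite /avg T0 invr0 !mul0r expr2 mul0r.
set m := avg a.
have m_real : m \is Num.real by rewrite rpredM ?rpredV ?realn ?rpred_sum.
have -> : avg (fun x => a x ^+ 2) = avg (fun x => (a x - m) ^+ 2) + m ^+ 2.
  rewrite (eq_avg (g := fun x => (a x - m) ^+ 2 + (2 * m * a x - m ^+ 2))).
    by rewrite avgD avgD -mulr_avgr avg_cst // -/m; ring.
  by move=> x; ring.
by rewrite lerDr avg_ge0 // => x; rewrite -realEsqr rpredB.
Qed.

Lemma ler_avg_expn2 T (a : T -> C) (n : nat) : (forall x, 0 <= a x) ->
  avg a ^+ (2 ^ n) <= avg (fun x => a x ^+ (2 ^ n)).
Proof.
elim: n a => [|n IHn] a a_ge0; first by rewrite !expr1 lexx.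
have a2_ge0 x : 0 <= a x ^+ 2 by rewrite exprn_ge0.
rewrite expnS exprM; apply: (@le_trans _ _ (avg (fun x => a x ^+ 2) ^+ (2 ^ n))).
  rewrite lerXn2r ?nnegrE ?exprn_ge0 ?avg_ge0 //.
  by apply: ler_sqr_avg => x; rewrite ger0_real.
apply: le_trans (IHn _ a2_ge0) _.
by apply: ler_avg => x; rewrite exprM.
Qed.

Lemma telescope_avg_prod T (I : Type) (a : I -> T -> C) (d b : I -> C) (L : seq I) :
  (0 < #|T|)%N -> (forall i, `|d i| <= 1) ->
  (forall s i L', L = s ++ i :: L' ->
     `|avg (fun x => (a i x - d i) * \prod_(j <- L') a j x)| <= b i) ->
  `|avg (fun x => \prod_(i <- L) a i x) - \prod_(i <- L) d i| <= \sum_(i <- L) b i.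
Proof.
move=> T_gt0 d_le1; elim: L => [|i L IHL] bound.
  by rewrite (eq_avg (g := fun=> 1)) => [|x]; rewrite !big_nil ?avg_cst ?subrr ?normr0.
have -> : avg (fun x => \prod_(j <- i :: L) a j x) - \prod_(j <- i :: L) d j =
    avg (fun x => (a i x - d i) * \prod_(j <- L) a j x) +
    d i * (avg (fun x => \prod_(j <- L) a j x) - \prod_(j <- L) d j).
  rewrite big_cons mulrBr mulr_avgr addrA -avgD; congr (_ - _).
  by apply: eq_avg => x; rewrite big_cons mulrBl subrK.
rewrite big_cons; apply: le_trans (ler_normD _ _) _; apply: lerD; first exact: (bound [::]).
rewrite normrM; apply: le_trans (IHL _); first by rewrite ler_piMl ?normr_ge0.
by move=> s j L' LE; apply: (bound (i :: s)); rewrite LE.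
Qed.

End Average.

Section ConjAverage.
Variable C : numClosedFieldType.
Implicit Types T : finType.

Lemma conjC_avg T (f : T -> C) : (avg f)^* = avg (fun x => (f x)^*).
Proof. by rewrite /avg rmorphM fmorphV rmorph_nat rmorph_sum. Qed.

Lemma sqr_norm_avg T (h : T -> C) :
  `|avg h| ^+ 2 = avg (fun q : T * T => h q.1 * (h q.2)^*).
Proof.
rewrite normCK conjC_avg [LHS]mulrC mulr_avgr (avg_pair (fun x y => h x * (h y)^*)).
by apply: eq_avg => x; rewrite mulrC mulr_avgr.
Qed.

End ConjAverage.

Section Mix.
Variables (C : numFieldType) (U : finType) (X : U -> finType).
Local Notation P := (XU X).
Implicit Types (x p : P) (w : {set U}).

Definition mix x0 x1 w : P := [ffun u => if u \in w then x1 u else x0 u].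

Lemma mixE x0 x1 w u : mix x0 x1 w u = if u \in w then x1 u else x0 u.
Proof. by rewrite ffunE. Qed.

Lemma mix0 x0 x1 : mix x0 x1 set0 = x0.
Proof. by apply/ffunP => u; rewrite mixE inE. Qed.

Lemma mix_swapK x0 x1 w : mix (mix x0 x1 w) (mix x1 x0 w) w = x0.
Proof. by apply/ffunP => u; rewrite !mixE; case: (u \in w). Qed.

Lemma mix1C x p q (u v : U) : u != v ->
  mix (mix x q [set u]) p [set v] = mix (mix x p [set v]) q [set u].
Proof.
move=> uv; apply/ffunP => t; rewrite !mixE !inE.
by case: (eqVneq t v) => [->|//]; rewrite eq_sym (negPf uv).
Qed.

Lemma mix1_mix x0 x1 p p' w (v : U) : v \notin w ->
  mix (mix x0 x1 w) p [set v] = mix (mix x0 p [set v]) (mix x1 p' [set v]) w.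
Proof.
move=> vw; apply/ffunP => u; rewrite !mixE !inE.
by case: (eqVneq u v) => [->|_]; rewrite ?(negPf vw).
Qed.

Lemma mix1_mixU x0 x1 p p' w (v : U) : v \notin w ->
  mix (mix x0 x1 w) p' [set v] = mix (mix x0 p [set v]) (mix x1 p' [set v]) (v |: w).
Proof.
move=> vw; apply/ffunP => u; rewrite !mixE !inE.
by case: (eqVneq u v) => [->|_] //=; case: (u \in w).
Qed.

Lemma avg_mix (h : P -> C) w : avg (fun x => avg (fun p => h (mix x p w))) = avg h.
Proof.
pose s (q : P * P) := (mix q.1 q.2 w, mix q.2 q.1 w).
have sK : involutive s by case=> x p; rewrite /s /= !mix_swapK.
rewrite -(avg_pair (fun x p => h (mix x p w))) -(avg_pair_fst h).
exact: (avg_reindex_inj (fun q : P * P => h q.1) (inv_inj sK)).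
Qed.

Lemma avg_mix_pair (H : P -> P -> C) w :
  avg (fun pp : P * P => avg (fun q : P * P => H (mix q.1 pp.1 w) (mix q.2 pp.2 w))) =
  avg (fun q : P * P => H q.1 q.2).
Proof.
transitivity (avg (fun x0 => avg (fun p => avg (fun x1 => avg (fun p' =>
    H (mix x0 p w) (mix x1 p' w)))))).
  rewrite (avg_pair (fun p p' => avg (fun q : P * P => H (mix q.1 p w) (mix q.2 p' w)))).
  under eq_avg => p do under eq_avg => p' do
    rewrite (avg_pair (fun x0 x1 => H (mix x0 p w) (mix x1 p' w))).
  under eq_avg => p do rewrite exchange_avg.
  rewrite exchange_avg; apply: eq_avg => x0; apply: eq_avg => p.
  by rewrite exchange_avg.
rewrite (avg_pair H) -(avg_mix (fun y => avg (H y)) w).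
by apply: eq_avg => x0; apply: eq_avg => p; rewrite -(avg_mix (H (mix x0 p w)) w).
Qed.

End Mix.

Section BigSubset.
Variables (R : Type) (idx : R) (op : Monoid.com_law idx) (T : finType).

Lemma big_subsetD1 (A : {set T}) (v : T) (F : {set T} -> R) : v \in A ->
  \big[op/idx]_(w : {set T} | w \subset A) F w =
  \big[op/idx]_(w : {set T} | w \subset A :\ v) op (F w) (F (v |: w)).
Proof.
move=> vA; rewrite big_split (bigID [pred w : {set T} | v \in w]) /= Monoid.mulmC.
congr (op _ _); first by apply: eq_bigl => w; rewrite subsetD1.
rewrite (reindex_onto (fun w => v |: w) (fun w => w :\ v)) /=; last first.
  by move=> w /andP [_ vw]; rewrite setD1K.
apply: eq_bigl => w; rewrite subsetD1 setU11 andbT subUset sub1set vA /=.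
have [vw|vw] := boolP (v \in w); last by rewrite setU1K // eqxx.
rewrite andbF; apply/negbTE/negP => /andP [_ /eqP wE].
by move: vw; rewrite -wE !inE eqxx.
Qed.

End BigSubset.

Lemma card_set (T : finType) : #|{set T}| = (2 ^ #|T|)%N.
Proof. by rewrite -[LHS]cardsT -powersetT card_powerset cardsT. Qed.

Section BigMaxNonneg.
Variables (R : numDomainType) (I : eqType) (P : pred I) (F : I -> R).
Hypothesis F_ge0 : forall i, P i -> 0 <= F i.

Lemma bigmax_ge0 r : 0 <= \big[Num.max/0]_(i <- r | P i) F i.
Proof.
elim/big_ind: _ => // x y x_ge0 y_ge0.
by rewrite comparable_le_max ?x_ge0 // real_comparable ?ger0_real.
Qed.

Lemma le_bigmax_nneg r j : j \in r -> P j -> F j <= \big[Num.max/0]_(i <- r | P i) F i.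
Proof.
elim: r => // i s IHs; rewrite inE big_cons => /predU1P [<-{i} | js] Pj.
  by rewrite Pj comparable_le_max ?lexx // real_comparable ?ger0_real ?F_ge0 ?bigmax_ge0.
case: ifP => Pi; last exact: IHs.
by rewrite comparable_le_max ?IHs ?orbT // real_comparable ?ger0_real ?F_ge0 ?bigmax_ge0.
Qed.

End BigMaxNonneg.

Section BoxPowOn.
Variables (C : numClosedFieldType) (U : finType) (X : U -> finType).
Local Notation P := (XU X).

Definition conjn n (z : C) := iter n (fun z : C => z^*) z.

Lemma conjnM n a b : conjn n (a * b) = conjn n a * conjn n b.
Proof. by elim: n => //= n IHn; rewrite /conjn /= -!/(conjn _ _) IHn rmorphM. Qed.

Lemma conjnS n a : conjn n.+1 a = conjn n a^*.
Proof. by rewrite /conjn iterSr. Qed.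

(* [boxpow] in the coordinates of A, the other coordinates being averaged. *)
Definition boxpow_on (A : {set U}) (f : P -> C) : C :=
  avg (fun q : P * P =>
    \prod_(w : {set U} | w \subset A) conjn #|w| (f (mix q.1 q.2 w))).

Definition boxderiv (f : P -> C) (v : U) (pp : P * P) (x : P) : C :=
  f (mix x pp.1 [set v]) * (f (mix x pp.2 [set v]))^*.

Lemma boxpow_on0 (f : P -> C) : boxpow_on set0 f = avg f.
Proof.
rewrite /boxpow_on -(avg_pair_fst f); apply: eq_avg => q.
rewrite (eq_bigl (pred1 set0)) => [|w]; last by rewrite subset0.
by rewrite big_pred1_eq cards0 mix0.
Qed.

Lemma boxpow_onD1 (A : {set U}) (v : U) (f : P -> C) : v \in A ->
  boxpow_on A f = avg (fun pp : P * P => boxpow_on (A :\ v) (boxderiv f v pp)).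
Proof.
move=> vA.
pose Pi y0 y1 := \prod_(w : {set U} | w \subset A) conjn #|w| (f (mix y0 y1 w)).
transitivity (avg (fun q : P * P => Pi q.1 q.2)) => //.
rewrite -(avg_mix_pair Pi [set v]); apply: eq_avg => pp; apply: eq_avg => q.
rewrite /Pi (big_subsetD1 _ _ vA); apply: eq_bigr => w.
rewrite subsetD1 => /andP [_ vw].
rewrite /boxderiv conjnM (mix1_mix _ _ _ pp.2 vw) (mix1_mixU _ _ pp.1 _ vw).
by rewrite cardsU1 vw add1n conjnS.
Qed.

End BoxPowOn.

Section CauchySchwarzStep.
Variables (C : numClosedFieldType) (U : finType) (X : U -> finType).
Local Notation P := (XU X).
Variables (I : Type) (r : seq I) (f : P -> C) (g : I -> P -> C) (sel : I -> U) (v : U).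
Hypothesis g_le1 : forall i x, `|g i x| <= 1.
Hypothesis g_indep : forall i x q, g i (mix x q [set sel i]) = g i x.

(* One Cauchy-Schwarz step in coordinate v drops the factors g i that ignore v
   and differentiates the others in direction v; the latter still ignore
   their coordinate sel i, so the step can be iterated. *)
Definition cs_factor i (pp : P * P) : P -> C :=
  if sel i == v then fun=> 1 else boxderiv (g i) v pp.

Definition cs_sel (v' : U) i := if sel i == v then v' else sel i.

Definition cs_avg (pp : P * P) : C :=
  avg (fun x => boxderiv f v pp x * \prod_(i <- r) cs_factor i pp x).

Lemma cs_factor_le1 i pp x : `|cs_factor i pp x| <= 1.
Proof.
rewrite /cs_factor; case: ifP => _; first by rewrite normr1.
by rewrite normrM norm_conjC mulr_ile1 ?normr_ge0.
Qed.

Lemma cs_factor_indep v' i pp x q :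
  cs_factor i pp (mix x q [set cs_sel v' i]) = cs_factor i pp x.
Proof.
rewrite /cs_factor /cs_sel; case: eqVneq => [//|sel_v].
by rewrite /boxderiv !(mix1C _ _ _ sel_v) !g_indep.
Qed.

Let rest y := \prod_(i <- r) (if sel i == v then 1 else g i y).
Let free x := \prod_(i <- r) (if sel i == v then g i x else 1).
Let fiber x := avg (fun p => f (mix x p [set v]) * rest (mix x p [set v])).

Lemma avg_prod_free_fiber :
  avg (fun x => f x * \prod_(i <- r) g i x) = avg (fun x => free x * fiber x).
Proof.
rewrite -(avg_mix (fun y => f y * \prod_(i <- r) g i y) [set v]); apply: eq_avg => x.
rewrite /fiber mulr_avgr; apply: eq_avg => p; rewrite mulrCA; congr (_ * _).
rewrite /free /rest -big_split /=; apply: eq_bigr => i _.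
by case: eqVneq => [<-|_]; rewrite ?g_indep ?mulr1 ?mul1r.
Qed.

Lemma avg_sqr_norm_fiber : avg (fun x => `|fiber x| ^+ 2) = avg cs_avg.
Proof.
rewrite (exchange_avg (fun pp x => boxderiv f v pp x * \prod_(i <- r) cs_factor i pp x)).
apply: eq_avg => x; rewrite sqr_norm_avg; apply: eq_avg => -[p p'] /=.
rewrite /boxderiv rmorphM rmorph_prod mulrACA -big_split /=; congr (_ * _).
by apply: eq_bigr => i _; rewrite /cs_factor; case: (sel i == v); rewrite ?rmorph1 ?mulr1.
Qed.

Lemma avg_cs_ge0 : 0 <= avg cs_avg.
Proof. by rewrite -avg_sqr_norm_fiber avg_ge0 // => x; rewrite exprn_ge0. Qed.

Lemma cauchy_schwarz_step :
  `|avg (fun x => f x * \prod_(i <- r) g i x)| ^+ 2 <= avg cs_avg.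
Proof.
have free_le1 x : `|free x| <= 1.
  rewrite normr_prod; apply: prodr_ile1 => i _.
  by case: (sel i == v); rewrite ?normr1 ?lexx ?ler01 ?normr_ge0 ?g_le1.
rewrite avg_prod_free_fiber -avg_sqr_norm_fiber.
apply: le_trans (_ : avg (fun x => `|fiber x|) ^+ 2 <= _); last first.
  by apply: ler_sqr_avg => x; apply: normr_real.
rewrite lerXn2r ?nnegrE ?avg_ge0 //; apply: le_trans (ler_norm_avg _) _.
by apply: ler_avg => x; rewrite normrM ler_piMl.
Qed.

End CauchySchwarzStep.

Section GowersCauchySchwarz.
Variables (C : numClosedFieldType) (U : finType) (X : U -> finType).
Local Notation P := (XU X).

Lemma gowers_cauchy_schwarz (I : Type) (r : seq I) (n : nat) (A : {set U})
    (f : P -> C) (g : I -> P -> C) (sel : I -> U) :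
  #|A| = n.+1 -> (forall i, sel i \in A) -> (forall i x, `|g i x| <= 1) ->
  (forall i x q, g i (mix x q [set sel i]) = g i x) ->
  `|avg (fun x => f x * \prod_(i <- r) g i x)| ^+ (2 ^ n.+1) <= boxpow_on A f.
Proof.
elim: n A f g sel => [|n IHn] A f g sel cardA selA g_le1 g_indep;
  have /card_gt0P [v vA] : (0 < #|A|)%N by rewrite cardA.
  have Av : A :\ v = set0.
    by apply/eqP; rewrite -cards_eq0; move: cardA; rewrite (cardsD1 v A) vA add1n => -[->].
  have sel_v i : sel i = v.
    by apply/eqP; apply: contraT => ne; rewrite -(in_set0 (sel i)) -Av !inE ne selA.
  suff -> : boxpow_on A f = avg (cs_avg r f g sel v).
    by rewrite expn1; exact: cauchy_schwarz_step.
  rewrite (boxpow_onD1 _ vA) Av; apply: eq_avg => pp; rewrite boxpow_on0.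
  apply: eq_avg => x; rewrite big1 ?mulr1 // => i _.
  by rewrite /cs_factor sel_v eqxx.
have cardAv : #|A :\ v| = n.+1 by move: cardA; rewrite (cardsD1 v A) vA add1n => -[].
have /card_gt0P [v' v'A] : (0 < #|A :\ v|)%N by rewrite cardAv.
have cs_selA i : cs_sel sel v v' i \in A :\ v.
  by rewrite /cs_sel; case: eqVneq => // ne; rewrite !inE ne selA.
rewrite (boxpow_onD1 _ vA) expnS exprM.
pose b pp := `|cs_avg r f g sel v pp|.
have b_ge0 pp : 0 <= b pp := normr_ge0 _.
apply: le_trans (_ : avg b ^+ (2 ^ n.+1) <= _).
  apply: lerXn2r; rewrite ?nnegrE ?exprn_ge0 ?avg_ge0 //.
  apply: le_trans (cauchy_schwarz_step r f v g_le1 g_indep) _.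
  by rewrite -[avg _]ger0_norm ?avg_cs_ge0 ?ler_norm_avg.
apply: le_trans (ler_avg_expn2 _ b_ge0) _; apply: ler_avg => pp.
apply: IHn => //; [move=> i x; exact: cs_factor_le1 | move=> i x q; exact: cs_factor_indep].
Qed.

End GowersCauchySchwarz.

Section Restriction.
Variables (C : numClosedFieldType) (U : finType) (X : U -> finType).
Local Notation P := (XU X).
Hypothesis P_gt0 : (0 < #|P|)%N.
Implicit Types (V W : {set U}) (x q : P).

Definition ext (V : {set U}) (x : P) (y : XV X V) : P :=
  [ffun u => match decP (@idP (u \in V)) with
             | left uV => y (exist (fun u => u \in V) u uV)
             | right _ => x u end].

Lemma restr_ext V x (y : XV X V) : restr V (ext x y) = y.
Proof.
apply/ffunP => -[u uV]; rewrite !ffunE /=.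
by case: (decP idP) => [uV'|//]; rewrite (bool_irrelevance uV' uV).
Qed.

Lemma ext_restr V (x x' : P) : ext x' (restr V x) = mix x' x V.
Proof.
apply/ffunP => u; rewrite !ffunE /=.
by case: (decP idP) => [uV|/negP/negbTE ->]; rewrite ?ffunE ?uV.
Qed.

Lemma ext_out V x (y : XV X V) u : u \notin V -> ext x y u = x u.
Proof. by move=> uV; rewrite ffunE; case: (decP idP) => // uV'; rewrite uV' in uV. Qed.

Lemma restr_mix1 W x q u : u \notin W -> restr W (mix x q [set u]) = restr W x.
Proof.
move=> uW; apply/ffunP => i; rewrite !ffunE inE.
by case: eqVneq => // iu; rewrite -iu (valP i) in uW.
Qed.

Lemma XV_gt0 V : (0 < #|XV X V|)%N.
Proof. by have /card_gt0P [x _] := P_gt0; apply/card_gt0P; exists (restr V x). Qed.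

Lemma avg_restr V (h : XV X V -> C) : avg (fun x : P => h (restr V x)) = avg h.
Proof.
pose s (q : P * XV X V) := (ext q.1 q.2, restr V q.1).
have sK : involutive s.
  case=> x y; rewrite /s /= restr_ext ext_restr; congr (_, _).
  by apply/ffunP => u; rewrite mixE; case: ifPn => // uV; rewrite ext_out.
transitivity (avg (fun q : P * XV X V => h (restr V q.1))).
  rewrite (avg_pair (fun x _ => h (restr V x))).
  by apply: eq_avg => x; rewrite avg_cst ?XV_gt0.
transitivity (avg (fun q : P * XV X V => h q.2)).
  exact: (avg_reindex_inj (fun q : P * XV X V => h q.2) (inv_inj sK)).
by rewrite (avg_pair (fun _ y => h y)) avg_cst.
Qed.

Lemma prod_subset_ffun V (F : {set U} -> C) :
  \prod_(w : {set U} | w \subset V) F w =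
  \prod_(w : {ffun subidx V -> bool}) F (val @: [set i | w i]).
Proof.
pose psi (w : {set U}) := [ffun i : subidx V => val i \in w].
rewrite (reindex (fun w : {ffun subidx V -> bool} => val @: [set i | w i])) /=.
  apply: eq_bigl => w; apply/subsetP => _ /imsetP [i _ ->]; exact: (valP i).
exists psi => [w _ | w].
  by apply/ffunP => i; rewrite ffunE (mem_imset _ _ val_inj) inE.
rewrite inE => wV; apply/setP => u; apply/imsetP/idP => [[i] | uw].
  by rewrite inE ffunE => ? ->.
by exists (exist (fun u => u \in V) u (subsetP wV u uw)); rewrite // inE ffunE.
Qed.

Lemma boxpow_on_restr V (f : XV X V -> C) :
  boxpow_on V (fun x => f (restr V x)) = boxpow f.
Proof.
pose H (y0 y1 : XV X V) := \prod_(w : {ffun subidx V -> bool})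
  iter #|[set i | w i]| (fun z : C => z^*) (f (xomega y0 y1 w)).
transitivity (avg (fun q : P * P => H (restr V q.1) (restr V q.2))).
  apply: eq_avg => q; rewrite prod_subset_ffun; apply: eq_bigr => w _.
  rewrite /conjn (card_imset _ val_inj); congr (iter _ _ (f _)).
  by apply/ffunP => i; rewrite !ffunE (mem_imset _ _ val_inj) inE; case: (w i).
rewrite (avg_pair (fun x0 x1 => H (restr V x0) (restr V x1))).
under eq_avg do rewrite (avg_restr (H (restr V _))).
by rewrite (avg_restr (fun y0 => avg (H y0))) -(avg_pair H).
Qed.

End Restriction.

Section BoxNormBound.
Variables (C : numClosedFieldType) (U : finType) (X : U -> finType).
Hypothesis X_gt0 : forall u, (0 < #|X u|)%N.
Local Notation P := (XU X).

Lemma XU_gt0 : (0 < #|P|)%N.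
Proof.
apply/card_gt0P.
by exists (finfun (fun u => xchoose (elimT card_gt0P (X_gt0 u))) : P).
Qed.

Lemma norm_avg_restr_prod_le_boxpow (I : Type) (r : seq I) (V : {set U}) (f : XV X V -> C)
    (g : I -> P -> C) (sel : I -> U) :
  V != set0 -> (forall i, sel i \in V) -> (forall i x, `|g i x| <= 1) ->
  (forall i x q, g i (mix x q [set sel i]) = g i x) ->
  `|avg (fun x => f (restr V x) * \prod_(i <- r) g i x)| ^+ (2 ^ #|V|) <= boxpow f.
Proof.
move=> V0 selV g_le1 g_indep.
have cardV : #|V| = #|V|.-1.+1 by rewrite prednK // card_gt0.
rewrite -(boxpow_on_restr XU_gt0) {1}cardV.
exact: gowers_cauchy_schwarz.
Qed.

Lemma boxpow_ge0 (V : {set U}) (f : XV X V -> C) : V != set0 -> 0 <= boxpow f.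
Proof.
move=> V0; have /set0Pn [v vV] := V0.
have g_le1 (i : unit) (x : P) : `|(1 : C)| <= 1 by rewrite normr1.
have := norm_avg_restr_prod_le_boxpow [::] f V0 (fun _ => vV) g_le1 (fun _ _ _ => erefl).
by apply: le_trans; rewrite exprn_ge0.
Qed.

Lemma boxnorm_ge0 (V : {set U}) (f : XV X V -> C) : 0 <= boxnorm f.
Proof.
rewrite /boxnorm; case: eqP => [_|/eqP V0]; first exact: normr_ge0.
by rewrite rootC_ge0 ?expn_gt0 ?boxpow_ge0.
Qed.

Lemma norm_avg_restr_prod_le_boxnorm (I : Type) (r : seq I) (V : {set U})
    (f : XV X V -> C) (g : I -> P -> C) (sel : I -> U) :
  V != set0 -> (forall i, sel i \in V) -> (forall i x, `|g i x| <= 1) ->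
  (forall i x q, g i (mix x q [set sel i]) = g i x) ->
  `|avg (fun x => f (restr V x) * \prod_(i <- r) g i x)| <= boxnorm f.
Proof.
move=> V0 selV g_le1 g_indep; have N_gt0 : (0 < 2 ^ #|V|)%N by rewrite expn_gt0.
rewrite /boxnorm (negbTE V0) -(exprCK N_gt0 (normr_ge0 _)).
rewrite ler_rootC ?nnegrE ?exprn_ge0 ?boxpow_ge0 //.
exact: norm_avg_restr_prod_le_boxpow.
Qed.

End BoxNormBound.

Section Density.
Variables (C : numClosedFieldType) (U : finType) (X : U -> finType).
Hypothesis X_gt0 : forall u, (0 < #|X u|)%N.
Variable S : forall V : {set U}, {set XV X V}.
Local Notation P := (XU X).

Definition ind_restr (V : {set U}) (x : P) : C := ((restr V x \in S V)%:R : C).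
Definition density (V : {set U}) : C := avg (fun y : XV X V => ((y \in S V)%:R : C)).
Definition balanced (V : {set U}) (y : XV X V) : C := ((y \in S V)%:R : C) - density V.
Arguments balanced V y : clear implicits.

Lemma ind_restr_le1 V x : `|ind_restr V x| <= 1.
Proof. by rewrite /ind_restr; case: (_ \in _); rewrite ?normr1 ?normr0 ?ler01. Qed.

Lemma density_le1 V : `|density V| <= 1.
Proof.
by apply: norm_avg_le1 => y; case: (_ \in _); rewrite ?normr1 ?normr0 ?ler01.
Qed.

Lemma balanced_set0 (y : XV X set0) : balanced set0 y = 0.
Proof.
have all_eq (z : XV X set0) : z = y.
  by apply/ffunP => -[u u0]; move: (in_set0 u); rewrite u0.
rewrite /balanced /density (eq_avg (g := fun=> ((y \in S set0)%:R : C))) => [|z].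
  by rewrite avg_cst ?subrr ?XV_gt0 ?XU_gt0.
by rewrite (all_eq z).
Qed.

Lemma norm_avg_balanced_prod_le (V : {set U}) (L : seq {set U}) :
  {in L, forall W : {set U}, ~~ (V \subset W)} ->
  `|avg (fun x => (ind_restr V x - density V) * \prod_(W <- L) ind_restr W x)|
    <= boxnorm (balanced V).
Proof.
move=> notsub; have [-> | /set0Pn [v0 v0V]] := eqVneq V set0.
  rewrite (eq_avg (g := fun=> 0)) => [|x]; last first.
    have -> : ind_restr set0 x - density set0 = 0 := balanced_set0 (restr set0 x).
    by rewrite mul0r.
  by rewrite avg_cst ?normr0 ?boxnorm_ge0 ?XU_gt0.
pose sel W := odflt v0 [pick u in V :\: W].
have selV W : sel W \in V by rewrite /sel; case: pickP => [u /setDP []|].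
have sel_notin (W : {set U}) : ~~ (V \subset W) -> sel W \notin W.
  case/subsetPn=> u uV uW; rewrite /sel; case: pickP => [w /setDP [] //|/(_ u)].
  by rewrite !inE uV uW.
pose g (W : {set U}) (x : P) := if V \subset W then 1 else ind_restr W x.
rewrite (eq_avg (g := fun x => balanced V (restr V x) * \prod_(W <- L) g W x)) => [|x].
  apply: norm_avg_restr_prod_le_boxnorm selV _ _ => // [|W x|W x q].
  - by apply/set0Pn; exists v0.
  - by rewrite /g; case: ifP; rewrite ?normr1 ?ind_restr_le1.
  - by rewrite /g; case: ifPn => // VW; rewrite /ind_restr restr_mix1 ?sel_notin.
congr (_ * _); apply: eq_big_seq => W WL.
by rewrite /g (negbTE (notsub W WL)).
Qed.

End Density.
Arguments balanced C {U X} S V y.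

Definition card_ge (U : finType) : rel {set U} := fun A B => (#|B| <= #|A|)%N.

Lemma sorted_card_ge_not_subset (U : finType) (L s L' : seq {set U}) (V : {set U}) :
  uniq L -> sorted (@card_ge U) L -> L = s ++ V :: L' ->
  {in L', forall W : {set U}, ~~ (V \subset W)}.
Proof.
move=> uL sL LE W WL'; apply/negP => VW.
have /allP /(_ W WL') WV : all (card_ge V) L'.
  apply: order_path_min; first by move=> B A D /[swap]; apply: leq_trans.
  by move: sL; rewrite LE => /cat_sorted2 [].
have VWE : V = W by apply/eqP; rewrite eqEcard VW; exact: WV.
by move: uL; rewrite LE cat_uniq /= VWE WL' !andbF.
Qed.

Theorem lemma4p6 (C : numClosedFieldType) (U : finType) (X : U -> finType)
  (hX : forall u : U, (0 < #|X u|)%N)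
  (S : forall V : {set U}, {set XV X V})
  (k : int) (hk : k <= (#|U|)%:Z) :
  `| avg (fun x : XU X =>
          \prod_(V : {set U} | (#|V|)%:Z <= k) ((restr V x \in S V)%:R : C))
     - \prod_(V : {set U} | (#|V|)%:Z <= k)
          avg (fun y : XV X V => ((y \in S V)%:R : C)) |
  <= 2 ^+ #|U| *
     \big[Num.max/0]_(V : {set U} | (#|V|)%:Z <= k)
        boxnorm (fun y : XV X V =>
                   ((y \in S V)%:R : C) - avg (fun z : XV X V => ((z \in S V)%:R : C))).
Proof.
set M := \big[Num.max/0]_(V | _) _.
pose Pk (V : {set U}) := (#|V|)%:Z <= k.
pose L := sort (@card_ge U) (enum Pk).
have bigL (R : Type) (idx : R) (op : Monoid.com_law idx) (F : {set U} -> R) :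
    \big[op/idx]_(V <- L) F V = \big[op/idx]_(V | Pk V) F V.
  by rewrite (perm_big _ (permEl (perm_sort _ _))) big_enum.
rewrite -bigL (eq_avg (g := fun x => \prod_(V <- L) ind_restr C S V x)); last first.
  by move=> x; rewrite bigL.
apply: le_trans (telescope_avg_prod (b := fun V => boxnorm (balanced C S V))
  (XU_gt0 hX) (density_le1 C S) _) _.
  move=> s V L' LE; apply: (@norm_avg_balanced_prod_le C U X hX S V L').
  apply: sorted_card_ge_not_subset LE; rewrite ?sort_uniq ?enum_uniq //.
  by apply: sort_sorted => A B; apply: leq_total.
have bn_ge0 V : 0 <= boxnorm (balanced C S V) := boxnorm_ge0 hX (balanced C S V).
rewrite bigL; apply: le_trans (_ : \sum_(V | Pk V) M <= _).
  by apply: ler_sum => V PkV; apply: le_bigmax_nneg; rewrite ?mem_index_enum.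
rewrite sumr_const -[M *+ _]mulr_natl ler_wpM2r ?bigmax_ge0 //.
by rewrite -natrX ler_nat -card_set max_card.
Qed.
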